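(* Let $\mathbf{X}\in\mathbb{R}^{n\times p}$ with $n>p$ have full column rank, let $\mathbf{D}\in\mathbb{R}^{m\times p}$ ($m<p$) have full row rank, let $\mathbf{E}\in\mathbb{R}^{(p-m)\times p}$ be such that $\tilde{\mathbf{D}}=[\mathbf{D}^\top,\mathbf{E}^\top]^\top$ is invertible, and write $\tilde{\mathbf{D}}^{-1}=[\mathbf{Z},\mathbf{F}]$ with $\mathbf{Z}\in\mathbb{R}^{p\times m}$, $\mathbf{F}\in\mathbb{R}^{p\times(p-m)}$. Let $\mathbf{M}=\mathbf{I}_n-\mathbf{X}\mathbf{F}[(\mathbf{X}\mathbf{F})^\top\mathbf{X}\mathbf{F}]^{-1}(\mathbf{X}\mathbf{F})^\top$ and $\mathbf{X}^*=\mathbf{M}\mathbf{X}\mathbf{Z}$. Then $\mathbf{X}^*$ has full column rank $m$, and hence $\boldsymbol\Sigma^*=\mathbf{X}^{*\top}\mathbf{X}^*$ is invertible. *)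

From HB Require Import structures.
From mathcomp Require Import all_boot all_order all_algebra.
Set Implicit Arguments. Unset Strict Implicit. Unset Printing Implicit Defensive.
Import Order.TTheory GRing.Theory Num.Theory.
Local Open Scope ring_scope.

Definition resid_proj (R : fieldType) (n k : nat) (A : 'M[R]_(n, k)) : 'M[R]_n :=
  1%:M - A *m invmx (A^T *m A) *m A^T.

From HB Require Import structures.
From mathcomp Require Import all_boot all_order all_algebra.
Import Order.TTheory GRing.Theory Num.Theory.
Local Open Scope ring_scope.

(* If X^* v = 0, then X Z v lies in the column space of X F, i.e.
   X (Z v - F w) = 0 for some w; this holds whatever matrix stands for
   [(X F)^T X F]^{-1}.  Since X is
   injective, Z v = F w, and the invertibility of [Z, F] forces v = 0.
   The Gram matrix of a real matrix with independent columns is invertible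
   because v^T B^T B v = |B v|^2. *)

Lemma col_freeP {R : fieldType} {n k : nat} (B : 'M[R]_(n, k)) :
  reflect (forall v : 'cV_k, B *m v = 0 -> v = 0) (\rank B == k).
Proof.
have -> : (\rank B == k) = row_free B^T by rewrite /row_free mxrank_tr.
apply: (iffP idP) => [freeBT v Bv0 | injB].
  apply: trmx_inj; apply/eqP; rewrite trmx0 -(mulmx_free_eq0 _ freeBT).
  by rewrite -trmx_mul Bv0 trmx0.
apply: inj_row_free => v vBT0; apply: trmx_inj; rewrite trmx0.
by apply: injB; rewrite -[B]trmxK -trmx_mul vBT0 trmx0.
Qed.

Lemma unitmx_row_mx_mul_eq0 {R : comUnitRingType} {m q : nat}
    {Z : 'M[R]_(m + q, m)} {F : 'M[R]_(m + q, q)} {v : 'cV_m} {u : 'cV_q} :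
  row_mx Z F \in unitmx -> Z *m v + F *m u = 0 -> v = 0 /\ u = 0.
Proof.
move=> unitZF; rewrite -mul_row_col => ZFvu0.
by apply: eq_col_mx; rewrite col_mx0 -(mulKmx unitZF (col_mx v u)) ZFvu0 mulmx0.
Qed.

Lemma mul_resid_proj {R : fieldType} {n k r : nat}
    (A : 'M[R]_(n, k)) (Y : 'M[R]_(n, r)) :
  resid_proj A *m Y = Y - A *m (invmx (A^T *m A) *m A^T *m Y).
Proof. by rewrite /resid_proj mulmxBl mul1mx !mulmxA. Qed.

Lemma trmx_mul_self_eq0 {R : realFieldType} {n : nat} (v : 'cV[R]_n) :
  (v^T *m v == 0) = (v == 0).
Proof.
apply/eqP/eqP => [vTv0 | ->]; last by rewrite mulmx0.
have /eqP := congr1 (fun M : 'M[R]_1 => M 0 0) vTv0; rewrite !mxE.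
rewrite psumr_eq0 => [/allP vi0 | i _]; last by rewrite !mxE -expr2 sqr_ge0.
apply/matrixP => i j; rewrite (ord1 j) mxE.
by have := vi0 i (mem_index_enum i); rewrite !mxE -expr2 sqrf_eq0 => /eqP.
Qed.

Lemma unitmx_gram {R : realFieldType} {n k : nat} (B : 'M[R]_(n, k)) :
  \rank B = k -> B^T *m B \in unitmx.
Proof.
move=> /eqP /col_freeP injB; rewrite -row_free_unit /row_free.
apply/col_freeP => v BTBv0; apply/injB/eqP.
by rewrite -trmx_mul_self_eq0 trmx_mul -mulmxA (mulmxA B^T) BTBv0 mulmx0.
Qed.

(* p = m + q, with q = p - m >= 1 (i.e. m < p). *)
Theorem mainTheorem12 (R : realFieldType) (n m q : nat)
  (X : 'M[R]_(n, m + q)) (D : 'M[R]_(m, m + q)) (E : 'M[R]_(q, m + q))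
  (Z : 'M[R]_(m + q, m)) (F : 'M[R]_(m + q, q)) :
  (m + q < n)%N -> (0 < q)%N ->
  \rank X = (m + q)%N ->
  \rank D = m ->
  col_mx D E \in unitmx ->
  invmx (col_mx D E) = row_mx Z F ->
  let Xs := resid_proj (X *m F) *m X *m Z in
  \rank Xs = m /\ Xs^T *m Xs \in unitmx.
Proof.
move=> _ _ /eqP /col_freeP injX _ unitDE invDE Xs.
have unitZF : row_mx Z F \in unitmx by rewrite -invDE unitmx_inv.
have rankXs : \rank Xs = m.
  apply/eqP/col_freeP => v; rewrite /Xs -!mulmxA mul_resid_proj.
  set w := _ *m (X *m (Z *m v)) => /subr0_eq; rewrite -mulmxA => XZvXFw.
  have /injX : X *m (Z *m v + F *m - w) = 0
    by rewrite mulmxDr !mulmxN XZvXFw subrr.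
  by case/(unitmx_row_mx_mul_eq0 unitZF).
by split; last exact: unitmx_gram.
Qed.
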